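(* Let $n\ge1$ and let $f$ be an automorphism of the additive group $\mathbb{Z}^n$. Then: 1. If $f$ has a cycle of length $k$ other than the zero cycle $\{0\}$, then $f$ has infinitely many cycles of length $k$. 2. If $f$ has a chain, then $f$ has infinitely many chains. 3. If each standard basis vector $e_i$ ($1\le i\le n$) lies in a cycle of $f$, then every element of $\mathbb{Z}^n$ lies in a cycle of $f$, i.e., $f$ has no chains.
   Context: For a bijection $f$ of a set $A$, a cycle is a finite sequence $a_1,\dots,a_m$ of distinct elements with $f(a_j)=a_{j+1}$ for $j<m$ and $f(a_m)=a_1$ (length $m$); a chain is a two-sided infinite sequence $\dots,a_{-1},a_0,a_1,\dots$ of distinct elements with $f(a_j)=a_{j+1}$ for all $j$. Every element lies in exactly one cycle or chain. For an automorphism of $\mathbb{Z}^n$, the zero cycle is the fixed point $0$. $e_i\in\mathbb{Z}^n$ has $1$ in coordinate $i$ and $0$ elsewhere. *)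

From mathcomp Require Import all_boot all_order all_algebra.
Set Implicit Arguments. Unset Strict Implicit. Unset Printing Implicit Defensive.
Import GRing.Theory.
Local Open Scope ring_scope.

Notation Zn n := 'rV[int]_n.

Definition std_basis (n : nat) (i : 'I_n) : Zn n := delta_mx 0 i.

Definition is_group_aut (n : nat) (f : Zn n -> Zn n) : Prop :=
  (forall x y, f (x + y) = f x + f y) /\ bijective f.

Definition is_cycle (T : eqType) (f : T -> T) (k : nat) (c : seq T) : Prop :=
  (0 < k)%N /\ size c = k /\ uniq c /\ fcycle f c.

Definition is_chain (T : Type) (f : T -> T) (a : int -> T) : Prop :=
  injective a /\ (forall j, f (a j) = a (j + 1)).

(* Cycles / chains are identified when they have the same underlying set
   (i.e. up to rotation / shift of indices). *)
Definition same_cycle (T : eqType) (c d : seq T) : Prop := c =i d.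
Definition same_chain (T : Type) (a b : int -> T) : Prop :=
  forall x, (exists j, a j = x) <-> (exists j, b j = x).

Definition inf_many_cycles (T : eqType) (f : T -> T) (k : nat) : Prop :=
  forall (m : nat) (F : 'I_m -> seq T), (forall i, is_cycle f k (F i)) ->
    exists c, is_cycle f k c /\ forall i, ~ same_cycle c (F i).

Definition inf_many_chains (T : Type) (f : T -> T) : Prop :=
  forall (m : nat) (F : 'I_m -> int -> T), (forall i, is_chain f (F i)) ->
    exists a, is_chain f a /\ forall i, ~ same_chain a (F i).

Definition lies_in_cycle (T : eqType) (f : T -> T) (x : T) : Prop :=
  exists k c, is_cycle f k c /\ x \in c.

From HB Require Import structures.
From mathcomp Require Import all_boot all_order all_algebra.
From Stdlib Require Import Classical.
Set Implicit Arguments. Unset Strict Implicit. Unset Printing Implicit Defensive.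
Import GRing.Theory Num.Theory.
Local Open Scope ring_scope.

(* An additive f commutes with x |-> M x, which is injective on Z^n for
   M > 0, so multiplying a cycle or a chain by M gives again a cycle or a
   chain.  A cycle through x <> 0 therefore has infinitely many distinct
   multiples.  For a chain with a nonzero coordinate c, the multiples by P^s,
   P > |c|, are pairwise different chains, because P^(s'-s) cannot divide c.
   If every e_i lies in a cycle, a common period K makes f^K fix every e_i,
   hence all of Z^n by additivity: every point is periodic, so lies in a
   cycle and on no chain. *)

Section Orbits.
Variables (T : eqType) (f : T -> T).

Lemma iter_fix_dvdn k K x : (k %| K)%N -> iter k f x = x -> iter K f x = x.
Proof. by move=> /dvdnP[q ->] fx; rewrite iterM iter_fix. Qed.

Lemma fcycle_iter_size c x : fcycle f c -> x \in c -> iter (size c) f x = x.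
Proof.
move=> cyc_c xc; rewrite -(size_rot (index x c)).
move: cyc_c; rewrite -(rot_cycle (index x c)) (rot_index xc) /=.
set s := (drop _ _ ++ _) => /fpathP[m s_traj].
have m_eq : (size s).+1 = m by rewrite -(size_rcons s x) s_traj size_traject.
by rewrite -iterS m_eq -last_traject -s_traj last_rcons.
Qed.

Lemma lies_in_cycle_periodic x :
  lies_in_cycle f x -> exists2 k, (0 < k)%N & iter k f x = x.
Proof.
case=> k [c [[k_gt0 [size_c [_ cyc_c]]] xc]]; exists k => //.
by rewrite -size_c fcycle_iter_size.
Qed.

Lemma common_period (I : finType) (v : I -> T) :
  (forall i, exists2 k, (0 < k)%N & iter k f (v i) = v i) ->
  exists2 K, (0 < K)%N & forall i, iter K f (v i) = v i.
Proof.
case/fin_all_exists2=> k k_gt0 kP; exists (\prod_i k i)%N; first exact: prodn_gt0.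
by move=> i; apply: iter_fix_dvdn (kP i); rewrite (bigD1 i) //= dvdn_mulr.
Qed.

Lemma chain_iter (a : int -> T) : is_chain f a -> forall N : nat, iter N f (a 0) = a N.
Proof. by case=> _ aS; elim=> [|N IHN] //=; rewrite IHN aS -PoszD addn1. Qed.

Lemma chain_aperiodic (a : int -> T) K :
  is_chain f a -> iter K f (a 0) = a 0 -> K = 0%N.
Proof. by move=> chain_a; rewrite chain_iter // => /(proj1 chain_a) []. Qed.

Hypothesis f_inj : injective f.

Lemma iter_inj K : injective (iter K f).
Proof. by elim: K => [|K IHK] x y //= /f_inj/IHK. Qed.

Lemma periodic_lies_in_cycle x K : (0 < K)%N -> iter K f x = x -> lies_in_cycle f x.
Proof.
move=> K_gt0 fKx.
have ex_period : exists p, (0 < p)%N && (iter p f x == x).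
  by exists K; rewrite K_gt0 fKx eqxx.
case: (ex_minnP ex_period) => -[//|p] /andP[_ /eqP fpx] p_min.
exists p.+1, (traject f x p.+1); split; last by rewrite trajectS mem_head.
split=> //; split; first by rewrite size_traject.
split.
  rewrite looping_uniq; apply/negP => /trajectP[i lt_ip].
  rewrite -(subnKC (ltnW lt_ip)) iterD => /iter_inj fx.
  have := p_min (p - i)%N; rewrite subn_gt0 lt_ip fx eqxx => /(_ isT).
  by rewrite leqNgt ltnS leq_subr.
by rewrite trajectS /= -[x in rcons _ x]fpx iterSr -trajectSr fpath_traject.
Qed.

End Orbits.

Lemma morphD0 (U V : zmodType) (f : U -> V) : {morph f : x y / x + y} -> f 0 = 0.
Proof. by move=> fD; apply: (addrI (f 0)); rewrite -fD !addr0. Qed.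

Lemma iter_morphD (V : zmodType) (f : V -> V) :
  {morph f : x y / x + y} -> forall K, {morph iter K f : x y / x + y}.
Proof. by move=> fD; elim=> [|K IHK] x y //=; rewrite IHK fD. Qed.

Lemma exists_notin_seq (T : eqType) (b : nat -> T) (S : seq T) :
  injective b -> exists M, b M \notin S.
Proof.
move=> b_inj; have : ~~ all (mem S) [seq b M | M <- iota 0 (size S).+1].
  apply/negP => /allP/(uniq_leq_size _); rewrite (map_inj_uniq b_inj) iota_uniq.
  by rewrite size_map size_iota ltnn => /(_ isT).
by case/allPn=> _ /mapP[M _ ->]; exists M.
Qed.

Lemma uniq_exists_neq (T : eqType) (z : T) (c : seq T) :
  uniq c -> c != [::] -> c != [:: z] -> exists2 x, x \in c & x != z.
Proof.
case: c => [//|y [|y' c]] /=.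
  by move=> _ _; rewrite eqseq_cons andbT; exists y; rewrite ?mem_head.
rewrite inE negb_or => /andP[/andP[y_neq_y' _] _] _ _.
case: (eqVneq y z) => [yz|]; last by exists y; rewrite ?mem_head.
by exists y'; rewrite ?inE ?eqxx ?orbT // -yz eq_sym.
Qed.

(* Pigeonhole: since R is Euclidean, each F i is related to at most one b s. *)
Lemma exists_unrelated (A : Type) (R : A -> A -> Prop) (b : nat -> A) :
  (forall u v w, R u w -> R v w -> R u v) ->
  (forall s s', (s < s')%N -> ~ R (b s) (b s')) ->
  forall m (F : 'I_m -> A), exists s, forall i, ~ R (b s) (F i).
Proof.
move=> R_euclid b_sep m F; apply: NNPP => none.
have hit (s : 'I_m.+1) : exists i, R (b s) (F i).
  by apply: NNPP => miss; apply: none; exists s => i Ri; apply: miss; exists i.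
have [g gP] := fin_all_exists hit.
have g_inj : injective g.
  move=> s s' eq_g; apply/val_inj; case: (ltngtP s s') => // lt_ss'; apply: False_ind.
    by apply: (b_sep _ _ lt_ss'); apply: R_euclid (gP s) _; rewrite eq_g.
  by apply: (b_sep _ _ lt_ss'); apply: R_euclid (gP s') _; rewrite -eq_g.
by have := leq_card g g_inj; rewrite !card_ord ltnn.
Qed.

Section Scaling.
Variables (R : numDomainType) (p q : nat).
Implicit Types A : 'M[R]_(p, q).

Lemma mxneq0_entry A : A != 0 -> exists i j, A i j != 0.
Proof.
move=> A_neq0; have /existsP[[i j] Aij] : [exists ij : 'I_p * 'I_q, A ij.1 ij.2 != 0].
  apply: contraNT A_neq0 => /existsPn A0; apply/eqP/matrixP => i j.
  by move: (A0 (i, j)); rewrite mxE negbK => /eqP.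
by exists i, j.
Qed.

Lemma mxmuln_inj M : (0 < M)%N -> injective (fun A : 'M[R]_(p, q) => A *+ M).
Proof.
move=> M_gt0 A B /matrixP AB; apply/matrixP => i j.
by apply: (pmulrnI M_gt0); have := AB i j; rewrite !mulmxnE.
Qed.

Lemma mxnatmul_inj A : A != 0 -> injective (GRing.natmul A).
Proof.
case/mxneq0_entry=> i [j Aij] M N /matrixP/(_ i j).
by rewrite !mulmxnE; apply: mulrIn.
Qed.

Variable f : 'M[R]_(p, q) -> 'M[R]_(p, q).
Hypothesis fD : {morph f : x y / x + y}.

HB.instance Definition _ := GRing.isNmodMorphism.Build _ _ f (morphD0 fD, fD).

Lemma is_cycle_mulrn k c M :
  (0 < M)%N -> is_cycle f k c -> is_cycle f k [seq x *+ M | x <- c].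
Proof.
move=> M_gt0 [k_gt0 [size_c [uniq_c cyc_c]]]; split=> //; split; first by rewrite size_map.
split; first by rewrite (map_inj_uniq (mxmuln_inj M_gt0)).
rewrite cycle_map (eq_cycle (e' := frel f)) // => x y /=.
by rewrite raddfMn (inj_eq (mxmuln_inj M_gt0)).
Qed.

Lemma is_chain_mulrn (a : int -> 'M[R]_(p, q)) M :
  (0 < M)%N -> is_chain f a -> is_chain f (fun j => a j *+ M).
Proof.
move=> M_gt0 [a_inj aS]; split=> [j j' /(mxmuln_inj M_gt0)/a_inj // | j].
by rewrite /= raddfMn /= aS.
Qed.

Lemma nonzero_cycle_inf_many k c :
  is_cycle f k c -> c != [:: 0] -> inf_many_cycles f k.
Proof.
move=> cyc_c c_neq0 m F _.
have [x xc x_neq0] : exists2 x, x \in c & x != 0.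
  case: cyc_c => k_gt0 [size_c [uniq_c _]]; apply: uniq_exists_neq => //.
  by rewrite -size_eq0 size_c -lt0n.
pose S := flatten [seq F i | i <- enum 'I_m].
have [M xM_notin] := exists_notin_seq S (inj_comp (mxnatmul_inj x_neq0) succn_inj).
exists [seq y *+ M.+1 | y <- c]; split; first exact: is_cycle_mulrn.
move=> i same; move/negP: xM_notin; apply; apply/flattenP; exists (F i).
  by apply: map_f; rewrite mem_enum.
by rewrite -same; apply: map_f.
Qed.

End Scaling.

Lemma mulrn_expn_neq (c d : int) (P s s' : nat) :
  c != 0 -> (`|c| < P)%N -> (s < s')%N -> c *+ (P ^ s) != d *+ (P ^ s').
Proof.
move=> c_neq0 lt_cP lt_ss'; apply/eqP => /(congr1 absz).
rewrite -[c *+ _]mulr_natr -[d *+ _]mulr_natr !abszM !natz !absz_nat.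
rewrite -(subnKC (ltnW lt_ss')) expnD mulnCA [(_ * P ^ s)%N]mulnC => /eqP.
have P_gt0 : (0 < P)%N by apply: leq_ltn_trans lt_cP.
rewrite eqn_pmul2l ?expn_gt0 ?P_gt0 // => /eqP c_eq.
have /dvdn_leq : (P ^ (s' - s) %| `|c|)%N by rewrite c_eq dvdn_mull.
rewrite absz_gt0 c_neq0 => /(_ isT); apply/negP; rewrite -ltnNge.
by apply: leq_trans lt_cP _; rewrite -{1}(expn1 P) leq_pexp2l ?subn_gt0.
Qed.

Lemma same_chain_euclid (T : Type) (u v w : int -> T) :
  same_chain u w -> same_chain v w -> same_chain u v.
Proof. by move=> uw vw x; split=> [/uw/vw | /vw/uw]. Qed.

Lemma chain_inf_many n (f : 'rV[int]_n -> 'rV[int]_n) (a : int -> 'rV[int]_n) :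
  {morph f : x y / x + y} -> is_chain f a -> inf_many_chains f.
Proof.
move=> fD chain_a m F _.
have [j0 aj0_neq0] : exists j0, a j0 != 0.
  case: (eqVneq (a 0) 0) => [a0|]; last by exists 0.
  by exists 1; rewrite -a0; apply/eqP => /(proj1 chain_a).
have [i [j c_neq0]] := mxneq0_entry aj0_neq0.
pose P := (`|a j0 i j|.+1)%N; pose b s k := a k *+ (P ^ s).
have b_sep s s' : (s < s')%N -> ~ same_chain (b s) (b s').
  move=> lt_ss' /(_ (b s j0))[+ _] => /(_ (ex_intro _ j0 erefl))[k].
  move/matrixP/(_ i j); rewrite /b !mulmxnE => /esym/eqP.
  by apply/negP/mulrn_expn_neq.
have [s fresh] := exists_unrelated (@same_chain_euclid _) b_sep F.
by exists (b s); split=> //; apply: is_chain_mulrn; rewrite ?expn_gt0.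
Qed.

Section StdBasis.
Variables (n : nat) (g : 'rV[int]_n -> 'rV[int]_n).
Hypothesis gD : {morph g : x y / x + y}.

HB.instance Definition _ := GRing.isNmodMorphism.Build _ _ g (morphD0 gD, gD).

Lemma additive_fix_std_basis_id :
  (forall i, g (std_basis i) = std_basis i) -> g =1 id.
Proof.
move=> g_basis x; rewrite [in LHS](row_sum_delta x) raddf_sum [in RHS](row_sum_delta x).
apply: eq_bigr => j _; rewrite -[x 0 j]intz !scaler_int raddfMz /=.
by congr (_ *~ _); apply: g_basis.
Qed.

End StdBasis.

Theorem proposition3p1 (n : nat) (f : 'rV[int]_n -> 'rV[int]_n) :
  (0 < n)%N -> is_group_aut f ->
  [/\ (forall (k : nat) (c : seq 'rV[int]_n),
         is_cycle f k c -> c != [:: 0] -> inf_many_cycles f k),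
      ((exists a : int -> 'rV[int]_n, is_chain f a) -> inf_many_chains f)
    & ((forall i : 'I_n, lies_in_cycle f (std_basis i)) ->
         (forall x : 'rV[int]_n, lies_in_cycle f x) /\
         (forall a : int -> 'rV[int]_n, ~ is_chain f a))].
Proof.
move=> _ [fD /bij_inj f_inj]; split.
- exact: nonzero_cycle_inf_many.
- by case=> a /(chain_inf_many fD).
- move=> basis_cyclic.
  have [K K_gt0 fK_basis] :=
    common_period (fun i => lies_in_cycle_periodic (basis_cyclic i)).
  have fK_id : iter K f =1 id := additive_fix_std_basis_id (iter_morphD fD K) fK_basis.
  split=> [x | a chain_a]; first exact: (periodic_lies_in_cycle f_inj K_gt0 (fK_id x)).
  by move: K_gt0; rewrite (chain_aperiodic chain_a (fK_id _)).
Qed.
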